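(* Let $(X,\tau_1,\tau_2)$ be a bitopological space, $i,j\in\{1,2\}$, $i\neq j$, which is $(i,j)_1$-nearly paralindelöf, $(i,j)$-regular and a $j$-$P$-space. If $X$ is $(i,j)$-weakly Lindelöf, then $(X,\tau_i)$ is Lindelöf.
   Context: $(X,\tau_1,\tau_2)$ is a bitopological space and $i,j\in\{1,2\}$, $i\neq j$. For $k\in\{1,2\}$, $k\text{-}\mathrm{int}$ and $k\text{-}\mathrm{cl}$ denote interior and closure with respect to $\tau_k$; ''$k$-open'' means $\tau_k$-open. A set $A$ is $(i,j)$-regular open if $A=i\text{-}\mathrm{int}(j\text{-}\mathrm{cl}(A))$. $X$ is $(i,j)$-regular if for each $x\in X$ and each $i$-open set $U$ containing $x$ there is an $i$-open set $V$ with $x\in V\subseteq j\text{-}\mathrm{cl}(V)\subseteq U$. A family $\mathcal V$ refines $\mathcal U$ if each member of $\mathcal V$ is contained in some member of $\mathcal U$; a family is a cover of $X$ if its union is $X$. A family is $k$-locally countable if every $x\in X$ has a $k$-open neighbourhood meeting at most countably many of its members. $X$ is a $k$-$P$-space if every intersection of countably many $k$-open sets is $k$-open. $X$ is $(i,j)_1$-nearly paralindelöf if every cover of $X$ by $(i,j)$-regular open sets has a refinement which is a cover of $X$ by $i$-open sets and which is $j$-locally countable. $X$ is $(i,j)$-weakly Lindelöf if every cover $\{U_\alpha:\alpha\in\Delta\}$ of $X$ by $i$-open sets has a countable subfamily $\{U_{\alpha_n}:n\in\mathbb N\}$ with $X=j\text{-}\mathrm{cl}(\bigcup_n U_{\alpha_n})$.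 *)

From Stdlib Require Import Classical.

Definition set (X : Type) := X -> Prop.
Definition subset {X : Type} (A B : set X) : Prop := forall x, A x -> B x.

Record is_topology {X : Type} (t : set X -> Prop) : Prop := {
  top_full : t (fun _ => True);
  top_union : forall F : set X -> Prop, (forall U, F U -> t U) ->
                t (fun x => exists U, F U /\ U x);
  top_inter : forall U V, t U -> t V -> t (fun x => U x /\ V x) }.

Definition btop {X : Type} (t1 t2 : set X -> Prop) (k : nat) : set X -> Prop :=
  if Nat.eqb k 1 then t1 else t2.

Definition interior {X : Type} (t : set X -> Prop) (A : set X) : set X :=
  fun x => exists U, t U /\ U x /\ subset U A.
Definition closure {X : Type} (t : set X -> Prop) (A : set X) : set X :=
  fun x => forall U, t U -> U x -> exists y, U y /\ A y.

Definition ij_regular_open {X : Type} (ti tj : set X -> Prop) (A : set X) : Prop :=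
  forall x, A x <-> interior ti (closure tj A) x.

Definition ij_regular {X : Type} (ti tj : set X -> Prop) : Prop :=
  forall x U, ti U -> U x ->
    exists V, ti V /\ V x /\ subset (closure tj V) U.

Definition cover {X : Type} (F : set X -> Prop) : Prop :=
  forall x, exists U, F U /\ U x.
Definition refines {X : Type} (V U : set X -> Prop) : Prop :=
  forall A, V A -> exists B, U B /\ subset A B.
Definition countable_family {X : Type} (G : set X -> Prop) : Prop :=
  exists f : nat -> set X, forall U, G U -> exists n, f n = U.
Definition subfamily {X : Type} (G F : set X -> Prop) : Prop :=
  forall U, G U -> F U.

Definition locally_countable {X : Type} (tk : set X -> Prop) (F : set X -> Prop) : Prop :=
  forall x, exists W, tk W /\ W x /\
    countable_family (fun V => F V /\ exists y, V y /\ W y).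

Definition P_space {X : Type} (tk : set X -> Prop) : Prop :=
  forall u : nat -> set X, (forall n, tk (u n)) -> tk (fun x => forall n, u n x).

Definition ij1_nearly_paralindelof {X : Type} (ti tj : set X -> Prop) : Prop :=
  forall U : set X -> Prop, (forall A, U A -> ij_regular_open ti tj A) -> cover U ->
    exists V : set X -> Prop, refines V U /\ cover V /\
      (forall A, V A -> ti A) /\ locally_countable tj V.

Definition ij_weakly_lindelof {X : Type} (ti tj : set X -> Prop) : Prop :=
  forall U : set X -> Prop, (forall A, U A -> ti A) -> cover U ->
    exists G, subfamily G U /\ countable_family G /\
      forall x, closure tj (fun y => exists A, G A /\ A y) x.

Definition lindelof {X : Type} (t : set X -> Prop) : Prop :=
  forall U : set X -> Prop, (forall A, U A -> t A) -> cover U ->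
    exists G, subfamily G U /\ countable_family G /\ cover G.

(* Regularity shrinks the i-open cover U to an i-open cover V whose members
   have j-closures inside members of U.  Weak Lindelöfness picks countably
   many members of V with j-dense union.  The points outside all of their
   j-closures form a countable intersection of j-open sets, hence a j-open
   set by the P-space property; it misses a dense set, so it is empty.  The
   j-closures therefore cover X, and the members of U containing them form a
   countable subcover. *)

From Stdlib Require Import Classical ClassicalEpsilon FunctionalExtensionality PropExtensionality.

Lemma is_topology_btop {X : Type} (t1 t2 : set X -> Prop) (k : nat) :
  is_topology t1 -> is_topology t2 -> is_topology (btop t1 t2 k).
Proof. intros; unfold btop; destruct (Nat.eqb k 1); assumption. Qed.

Lemma subset_closure {X : Type} (t : set X -> Prop) (A : set X) :
  subset A (closure t A).
Proof. intros x Ax U _ Ux; exists x; auto. Qed.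

Lemma open_not_closure {X : Type} (t : set X -> Prop) (A : set X) :
  is_topology t -> t (fun x => ~ closure t A x).
Proof.
  intros Ht.
  replace (fun x => ~ closure t A x)
    with (fun x => exists W, (t W /\ forall y, W y -> ~ A y) /\ W x).
  - apply (top_union _ Ht); intros W [tW _]; exact tW.
  - apply functional_extensionality; intro x; apply propositional_extensionality; split.
    + intros [W [[tW HW] Wx]] Hcl.
      destruct (Hcl W tW Wx) as [y [Wy Ay]]; exact (HW y Wy Ay).
    + intro Hncl.
      apply not_all_ex_not in Hncl as [W HW].
      apply imply_to_and in HW as [tW HW]; apply imply_to_and in HW as [Wx HW].
      exists W; split; [split|]; auto.
      intros y Wy Ay; apply HW; eauto.
Qed.

Lemma open_guarded {X : Type} (t : set X -> Prop) (P : Prop) (A : set X) :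
  is_topology t -> t A -> t (fun x => P -> A x).
Proof.
  intros Ht tA; destruct (classic P) as [p | np].
  - replace (fun x => P -> A x) with A; [exact tA|].
    apply functional_extensionality; intro x; apply propositional_extensionality; tauto.
  - replace (fun x => P -> A x) with (fun _ : X => True); [exact (top_full _ Ht)|].
    apply functional_extensionality; intro x; apply propositional_extensionality; tauto.
Qed.

(* In a P-space the closure of a countable union is the union of the closures. *)
Lemma P_space_dense_countable_union {X : Type} (t : set X -> Prop) (G : set X -> Prop) :
  is_topology t -> P_space t -> countable_family G ->
  (forall x, closure t (fun y => exists A, G A /\ A y) x) ->
  forall x, exists A, G A /\ closure t A x.
Proof.
  intros Ht HP [f Hf] Hdense x.
  set (O := fun y => forall n, G (f n) -> ~ closure t (f n) y).
  assert (tO : t O).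
  { apply HP; intro n; apply open_guarded, open_not_closure; auto. }
  apply NNPP; intro Hx.
  assert (Ox : O x) by (intros n Gn Hcl; apply Hx; eauto).
  destruct (Hdense x O tO Ox) as [y [Oy [A [GA Ay]]]].
  destruct (Hf A GA) as [n <-].
  exact (Oy n GA (subset_closure _ _ _ Ay)).
Qed.

Lemma regular_shrinking_cover {X : Type} (ti tj : set X -> Prop) (U : set X -> Prop) :
  ij_regular ti tj -> (forall A, U A -> ti A) -> cover U ->
  cover (fun V => ti V /\ exists B, U B /\ subset (closure tj V) B).
Proof.
  intros Hreg HUo HUc x.
  destruct (HUc x) as [B [UB Bx]].
  destruct (Hreg x B (HUo B UB) Bx) as [V [tV [Vx HVB]]].
  exists V; split; [split; [exact tV | exists B; auto] | exact Vx].
Qed.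

Lemma countable_subcover_of_refinement {X : Type} (S : set X -> set X)
    (G U : set X -> Prop) :
  countable_family G ->
  (forall A, G A -> exists B, U B /\ subset (S A) B) ->
  (forall x, exists A, G A /\ S A x) ->
  exists H, subfamily H U /\ countable_family H /\ cover H.
Proof.
  intros [f Hf] HGU HSc.
  assert (Hpick : forall n, exists B, G (f n) -> U B /\ subset (S (f n)) B).
  { intro n; destruct (classic (G (f n))) as [Gn | nGn].
    - destruct (HGU _ Gn) as [B HB]; exists B; auto.
    - exists (f n); tauto. }
  destruct (choice _ Hpick) as [g Hg].
  exists (fun B => exists n, G (f n) /\ B = g n); split; [| split].
  - intros B [n [Gn ->]]; apply Hg; exact Gn.
  - exists g; intros B [n [_ ->]]; eauto.
  - intro x; destruct (HSc x) as [A [GA SAx]].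
    destruct (Hf A GA) as [n <-].
    exists (g n); split; [eauto | apply (Hg n GA); exact SAx].
Qed.

Theorem mainTheorem7 (X : Type) (t1 t2 : set X -> Prop)
  (H1 : is_topology t1) (H2 : is_topology t2)
  (i j : nat) (hi : i = 1 \/ i = 2) (hj : j = 1 \/ j = 2) (hij : i <> j) :
  ij1_nearly_paralindelof (btop t1 t2 i) (btop t1 t2 j) ->
  ij_regular (btop t1 t2 i) (btop t1 t2 j) ->
  P_space (btop t1 t2 j) ->
  ij_weakly_lindelof (btop t1 t2 i) (btop t1 t2 j) ->
  lindelof (btop t1 t2 i).
Proof.
  intros _ Hreg HP HwL U HUo HUc.
  set (ti := btop t1 t2 i) in *; set (tj := btop t1 t2 j) in *.
  assert (Htj : is_topology tj) by (apply is_topology_btop; auto).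
  destruct (HwL _ (fun V HV => proj1 HV) (regular_shrinking_cover ti tj U Hreg HUo HUc))
    as [G [HGV [HGc HGd]]].
  apply (countable_subcover_of_refinement (closure tj) G U HGc).
  - intros A GA; exact (proj2 (HGV A GA)).
  - exact (P_space_dense_countable_union tj G Htj HP HGc HGd).
Qed.
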